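(* Let $B\in\mathbb{R}^{n\times n}$ be symmetric, $b\in\mathbb{R}^n$, $d\in\mathbb{R}$, $h(x)=x^TBx+2b^Tx+d$, and let $\alpha\le\beta$ be real numbers. Then there exists $\overline{x}\in\mathbb{R}^n$ with $\alpha<h(\overline{x})<\beta$ if and only if there exist $\widehat{x}\in\mathbb{R}^n$ and a symmetric matrix $\widehat{X}\in\mathbb{R}^{n\times n}$ with $\widehat{X}-\widehat{x}\widehat{x}^T$ positive definite such that $\alpha< B\bullet\widehat{X}+2b^T\widehat{x}+d<\beta$.
   Context: For matrices $M,N\in\mathbb{R}^{n\times n}$, $M\bullet N=\sum_{i,j}m_{ij}n_{ij}$. *)

From HB Require Import structures.
From mathcomp Require Import all_boot all_order all_algebra.
From mathcomp Require Import reals.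
Set Implicit Arguments. Unset Strict Implicit. Unset Printing Implicit Defensive.
Import Order.TTheory GRing.Theory Num.Theory.
Local Open Scope ring_scope.

Definition frob (R : ringType) (n : nat) (M N : 'M[R]_n) : R :=
  \sum_(i < n) \sum_(j < n) M i j * N i j.

Definition symmx (R : ringType) (n : nat) (M : 'M[R]_n) : Prop := M^T = M.

Definition posdefmx (R : numDomainType) (n : nat) (M : 'M[R]_n) : Prop :=
  forall v : 'cV[R]_n, v != 0 -> 0 < (v^T *m M *m v) 0 0.

Definition quadf (R : ringType) (n : nat) (B : 'M[R]_n) (b : 'cV[R]_n) (d : R)
  (x : 'cV[R]_n) : R :=
  (x^T *m B *m x) 0 0 + 2 * (b^T *m x) 0 0 + d.

From HB Require Import structures.
From mathcomp Require Import all_boot all_order all_algebra.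
From mathcomp Require Import reals.
From mathcomp Require Import ring lra.
Import Order.TTheory GRing.Theory Num.Theory.
Local Open Scope ring_scope.
Set Implicit Arguments. Unset Strict Implicit. Unset Printing Implicit Defensive.

(* If h takes a value in (alpha, beta) at x, then so does the relaxed form at
   (x, x x^T + e I) for small e > 0, since B \bullet (x x^T) = x^T B x.
   Conversely, writing Xhat = xhat xhat^T + P with P positive semidefinite,
   the relaxed value is h(xhat) + B \bullet P.  Sweeping P column by column
   writes it as a sum of rank-one matrices w w^T, so B \bullet P is a sum of
   values w^T B w; if it is nonzero, one direction y has y^T B y of the same
   sign, and then t |-> h(xhat + t y) - h(xhat), a quadratic with leading
   coefficient y^T B y, attains the value B \bullet P. *)

Section Frobenius.
Variables (R : comNzRingType) (n : nat).
Implicit Types (B M : 'M[R]_n) (u v w x y : 'cV[R]_n).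

Definition bform B u v : R := (u^T *m B *m v) 0 0.

Lemma frob_is_linear B : linear_for *%R (frob B).
Proof.
move=> a M N; rewrite /frob mulr_sumr -big_split; apply: eq_bigr => i _.
rewrite mulr_sumr -big_split; apply: eq_bigr => j _.
by rewrite !mxE mulrDr mulrCA.
Qed.

HB.instance Definition _ B :=
  GRing.isLinear.Build R 'M[R]_n R *%R (frob B) (frob_is_linear B).

Lemma mul_col_trE u v i j : (u *m v^T) i j = u i 0 * v j 0.
Proof. by rewrite mxE big_ord1 mxE. Qed.

Lemma frob_mul_col_tr B u v : frob B (u *m v^T) = bform B u v.
Proof.
rewrite /frob /bform mxE.
under [RHS]eq_bigr do rewrite mxE big_distrl.
rewrite exchange_big /=; apply: eq_bigr => i _; apply: eq_bigr => j _.
by rewrite mul_col_trE !mxE; ring.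
Qed.

Lemma frob_scalar B a : frob B a%:M = a * \tr B.
Proof.
rewrite /frob /mxtrace mulr_sumr; apply: eq_bigr => i _.
rewrite (bigD1 i) //= big1 ?addr0; first by rewrite !mxE eqxx mulr1n mulrC.
by move=> j /negPf ji; rewrite !mxE eq_sym ji mulr0n mulr0.
Qed.

Lemma tr_mulmx_col u v : (u^T *m v) 0 0 = (v^T *m u) 0 0.
Proof. by rewrite -(trmxK (v^T *m u)) trmx_mul trmxK [RHS]mxE. Qed.

Lemma bform_trC B u v : B^T = B -> bform B u v = bform B v u.
Proof.
by move=> BT; rewrite /bform -mulmxA tr_mulmx_col trmx_mul BT.
Qed.

Lemma bform_delta B i j : bform B (delta_mx i 0) (delta_mx j 0) = B i j.
Proof. by rewrite /bform trmx_delta -rowE -colE !mxE. Qed.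

Lemma bformBm (A C : 'M[R]_n) u v : bform (A - C) u v = bform A u v - bform C u v.
Proof. by rewrite /bform mulmxBr mulmxBl !mxE. Qed.

Lemma bform_mul_col_tr w v : bform (w *m w^T) v v = (v^T *m w) 0 0 ^+ 2.
Proof.
by rewrite /bform !mulmxA -[_ *m w^T *m v]mulmxA mxE big_ord1 -tr_mulmx_col.
Qed.

Lemma bform_expand B u v t :
  bform B (u + t *: v) (u + t *: v) =
  bform B u u + t * (bform B u v + bform B v u) + t ^+ 2 * bform B v v.
Proof.
rewrite /bform !mulmxDr -!scalemxAr [(u + _)^T]linearD /= !mulmxDl.
rewrite [(t *: v)^T]linearZ /= -!scalemxAl.
by rewrite !mxE; ring.
Qed.

Lemma quadf_frob B b d x P :
  frob B (P + x *m x^T) + 2 * (b^T *m x) 0 0 + d = quadf B b d x + frob B P.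
Proof. by rewrite [frob B _]linearD /= frob_mul_col_tr /quadf /bform; ring. Qed.

Lemma quadf_shift B b d x y t :
  quadf B b d (x + t *: y) = quadf B b d x +
    t * (bform B x y + bform B y x + 2 * (b^T *m y) 0 0) + t ^+ 2 * bform B y y.
Proof.
rewrite {1}/quadf -[(_^T *m B *m _) 0 0]/(bform B _ _) bform_expand /quadf /bform.
by rewrite mulmxDr -scalemxAr !mxE; ring.
Qed.

End Frobenius.

Section Semidefinite.
Variables (R : realFieldType) (n : nat).
Implicit Types (Q : 'M[R]_n).

Definition psdmx Q := forall v : 'cV[R]_n, 0 <= bform Q v v.

Lemma posdefmx_psdmx Q : posdefmx Q -> psdmx Q.
Proof.
move=> Qpd v; have [->|v0] := eqVneq v 0; last exact/ltW/Qpd.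
by rewrite /bform mulmx0 mxE.
Qed.

Lemma posdefmx_scalar (e : R) : 0 < e -> posdefmx (e%:M : 'M[R]_n).
Proof.
move=> e0 v v0; rewrite mul_mx_scalar -scalemxAl mxE pmulr_rgt0 //.
have sqr_entry_ge0 (i : 'I_n) : true -> 0 <= v^T 0 i * v i 0.
  by rewrite mxE -expr2 sqr_ge0.
rewrite mxE lt_def sumr_ge0 ?andbT //.
apply: contra v0 => /eqP/(psumr_eq0P sqr_entry_ge0) vi0; apply/eqP/matrixP => i j.
by rewrite ord1 !mxE; move: (vi0 i isT); rewrite !mxE -expr2 => /eqP; rewrite sqrf_eq0 => /eqP.
Qed.

(* A zero diagonal entry forces its column to vanish: otherwise the quadratic
   t |-> (e_i + t e_k)^T Q (e_i + t e_k) would be a nonconstant affine map. *)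
Lemma psdmx_zero_col Q (k : 'I_n) :
  Q^T = Q -> psdmx Q -> Q k k = 0 -> forall i, Q i k = 0.
Proof.
move=> QT Qpsd Qkk i.
have Qki : Q k i = Q i k by rewrite -[in LHS]QT mxE.
have affine_ge0 t : 0 <= Q i i + t * (Q i k + Q i k).
  by move: (Qpsd (delta_mx i 0 + t *: delta_mx k 0));
     rewrite bform_expand !bform_delta Qkk Qki mulr0 addr0.
apply/eqP; apply: contraT => Qik0.
move: (affine_ge0 (- (Q i i + 1) / (2 * Q i k))).
have -> : Q i i + - (Q i i + 1) / (2 * Q i k) * (Q i k + Q i k) = -1.
  by field.
by rewrite ler0N1.
Qed.

End Semidefinite.

Section Gram.
Variables (R : rcfType) (n : nat).
Implicit Types (B P Q : 'M[R]_n).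

(* One step of symmetric Gaussian elimination: w is column k of Q scaled by
   Q k k ^ (-1/2), so that Q - w w^T is the Schur complement of Q k k. *)
Lemma psdmx_sweep_col Q (k : 'I_n) : Q^T = Q -> psdmx Q ->
  exists w : 'cV[R]_n, [/\ psdmx (Q - w *m w^T),
    forall i, (Q - w *m w^T) i k = 0 &
    forall j, (forall i, Q i j = 0) -> forall i, (Q - w *m w^T) i j = 0].
Proof.
move=> QT Qpsd; have QC i j : Q i j = Q j i by rewrite -[in LHS]QT mxE.
have [Qkk|Qkk] := eqVneq (Q k k) 0.
  by exists 0; rewrite mul0mx subr0; split=> //; apply: psdmx_zero_col.
set e : 'cV[R]_n := delta_mx k 0.
have Qee : bform Q e e = Q k k by rewrite bform_delta.
have c0 : 0 < Q k k by rewrite lt_def Qkk -Qee Qpsd.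
set s := Num.sqrt (Q k k).
have s0 : s != 0 by rewrite sqrtr_eq0 -ltNge.
have s2 : Q k k = s ^+ 2 by rewrite sqr_sqrtr // ltW.
set w := s^-1 *: col k Q.
have QwE i j : (Q - w *m w^T) i j = Q i j - Q i k * Q j k / s ^+ 2.
  by rewrite !mxE big_ord1 !mxE; field.
exists w; split.
- move=> v; rewrite bformBm bform_mul_col_tr.
  have -> : (v^T *m w) 0 0 = s^-1 * bform Q v e.
    by rewrite -scalemxAr mxE colE mulmxA.
  move: (Qpsd (v + (- bform Q v e / s ^+ 2) *: e)).
  rewrite bform_expand (bform_trC e v QT) Qee s2.
  by congr (_ <= _); field.
- by move=> i; rewrite QwE s2; field.
- by move=> j Qj0 i; rewrite QwE Qj0 (QC j k) Qj0 mulr0 mul0r subr0.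
Qed.

Lemma psdmx_gram P : P^T = P -> psdmx P ->
  exists ws : seq 'cV[R]_n, P = \sum_(w <- ws) w *m w^T.
Proof.
move=> PT Ppsd.
have sweep k : (k <= n)%N -> exists ws : seq 'cV[R]_n, exists Q,
    [/\ Q^T = Q, psdmx Q, forall i (j : 'I_n), (j < k)%N -> Q i j = 0 &
        P = Q + \sum_(w <- ws) w *m w^T].
  elim: k => [_|k IHk lt_kn]; first by exists [::], P; rewrite big_nil addr0.
  have [ws [Q [QT Qpsd Qz ->]]] := IHk (ltnW lt_kn).
  have [w [Qwpsd Qwk Qwz]] := psdmx_sweep_col (Ordinal lt_kn) QT Qpsd.
  exists (w :: ws), (Q - w *m w^T); split=> //.
  - by rewrite linearB /= trmx_mul trmxK QT.
  - move=> i j; rewrite ltnS leq_eqVlt => /orP[/eqP jk|jk].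
      by rewrite (_ : j = Ordinal lt_kn) //; apply: val_inj.
    by apply: Qwz => i'; apply: Qz.
  - by rewrite big_cons addrA subrK.
have [ws [Q [_ _ Qz ->]]] := sweep n (leqnn n).
exists ws; suff -> : Q = 0 by rewrite add0r.
by apply/matrixP => i j; rewrite Qz ?mxE.
Qed.

Lemma frob_psdmx_sign B P : P^T = P -> psdmx P -> frob B P != 0 ->
  exists y, 0 < bform B y y * frob B P.
Proof.
move=> PT Ppsd s0; have [ws Pws] := psdmx_gram PT Ppsd.
have sE : frob B P = \sum_(w <- ws) bform B w w.
  by rewrite Pws linear_sum; apply: eq_bigr => w _; apply: frob_mul_col_tr.
have [/hasP[y _ ?]|/hasPn yneg] := boolP (has (fun y => 0 < bform B y y * frob B P) ws).
  by exists y.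
have : frob B P ^+ 2 <= 0.
  rewrite expr2 {1}sE mulr_suml big_seq; apply: sumr_le0 => y /yneg.
  by rewrite leNgt.
by rewrite leNgt exprn_even_gt0 ?s0.
Qed.

End Gram.

Lemma exists_quadratic_root (R : rcfType) (a L s : R) :
  0 < a * s -> exists t, t * L + t ^+ 2 * a = s.
Proof.
move=> as0; have a0 : a != 0 by apply: contraTneq as0 => ->; rewrite mul0r ltxx.
have D0 : 0 <= L ^+ 2 + 4 * a * s by rewrite -mulrA addr_ge0 ?sqr_ge0 // mulr_ge0 // ltW.
set r := Num.sqrt (L ^+ 2 + 4 * a * s).
have sE : s = (r ^+ 2 - L ^+ 2) / (4 * a) by rewrite sqr_sqrtr //; field.
by exists ((r - L) / (2 * a)); rewrite sE; field.
Qed.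

Lemma exists_pos_perturbation (R : realFieldType) (alpha beta q t : R) :
  alpha < q < beta -> exists2 e, 0 < e & alpha < q + e * t < beta.
Proof.
case/andP=> aq qb; set r := Num.min (q - alpha) (beta - q).
have r0 : 0 < r by rewrite lt_min !subr_gt0 aq qb.
have t1 : 0 < `|t| + 1 by rewrite ltr_pwDr.
exists (r / (`|t| + 1)); first exact: divr_gt0.
have : `|r / (`|t| + 1) * t| < r.
  rewrite normrM gtr0_norm ?divr_gt0 // mulrAC ltr_pdivrMr //.
  by rewrite ltr_pM2l // ltrDl.
rewrite ltr_norml => /andP[? ?].
have : r <= q - alpha by rewrite ge_min lexx.
have : r <= beta - q by rewrite ge_min lexx orbT.
by move=> ? ?; apply/andP; split; lra.
Qed.

Theorem lemma1 (R : realType) (n : nat) (B : 'M[R]_n) (b : 'cV[R]_n) (d alpha beta : R) :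
  symmx B -> alpha <= beta ->
  (exists xbar : 'cV[R]_n, alpha < quadf B b d xbar < beta) <->
  (exists (xhat : 'cV[R]_n) (Xhat : 'M[R]_n),
      symmx Xhat /\ posdefmx (Xhat - xhat *m xhat^T) /\
      alpha < frob B Xhat + 2 * (b^T *m xhat) 0 0 + d < beta).
Proof.
move=> _ _; split.
- case=> x hx; have [e e0 he] := exists_pos_perturbation (\tr B) hx.
  exists x, (x *m x^T + e%:M); split; [|split].
  + by rewrite /symmx linearD /= trmx_mul trmxK tr_scalar_mx.
  + by rewrite addrAC subrr add0r; apply: posdefmx_scalar.
  + by rewrite [x *m x^T + _]addrC quadf_frob frob_scalar.
- case=> x [X [XT [Xpd hX]]]; set P := X - x *m x^T in Xpd.
  have PT : P^T = P by rewrite /P linearB /= trmx_mul trmxK XT.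
  rewrite -[X](subrK (x *m x^T)) -/P quadf_frob in hX.
  have [s0|s0] := eqVneq (frob B P) 0; first by exists x; rewrite s0 addr0 in hX.
  have [y ys] := frob_psdmx_sign PT (posdefmx_psdmx Xpd) s0.
  have [t tE] := exists_quadratic_root (bform B x y + bform B y x + 2 * (b^T *m y) 0 0) ys.
  by exists (x + t *: y); rewrite quadf_shift -addrA tE.
Qed.
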